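(* Let $n\geq 8$ and let $G$ be an $n$-vertex planar graph containing no subgraph isomorphic to $S_{2,2}$. If $G$ has a vertex of degree at least $5$, then $e(G)\leq 2n-4$.
   Context: All graphs are finite and simple; $e(G)$ denotes the number of edges of $G$. The double star $S_{2,2}$ is the tree obtained from an edge $xy$ by joining $x$ to two new vertices and $y$ to two further new vertices (6 vertices in total). *)

From HB Require Import structures.
From mathcomp Require Import all_boot all_order all_algebra.
From mathcomp Require Import all_classical all_reals all_analysis.
From mathcomp Require Import Rstruct Rstruct_topology.
From Stdlib Require Import Rdefinitions.
Set Implicit Arguments. Unset Strict Implicit. Unset Printing Implicit Defensive.
Import Order.TTheory GRing.Theory Num.Theory.

Local Open Scope classical_set_scope.
Local Open Scope ring_scope.

Definition simple_graph (T : finType) (e : rel T) : Prop :=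
  symmetric e /\ irreflexive e.

Definition edges (T : finType) (e : rel T) : {set {set T}} :=
  [set E : {set T} | [exists x, exists y, e x y && (E == [set x; y]%SET)]].

Definition num_edges (T : finType) (e : rel T) : nat := #|edges e|.

Definition degree (T : finType) (e : rel T) (x : T) : nat := #|[set y | e x y]|.

Definition has_subgraph (U T : finType) (h : rel U) (e : rel T) : Prop :=
  exists f : U -> T, injective f /\ forall i j, h i j -> e (f i) (f j).

(* The double star S_{2,2} on 'I_6: central edge 0-1, 0 joined to 2,3,
   1 joined to 4,5 (as a symmetric relation). *)
Definition S22_edge (i j : nat) : bool :=
  [|| (i == 0%N) && (j == 1%N), (i == 0%N) && (j == 2%N), (i == 0%N) && (j == 3%N),
      (i == 1%N) && (j == 4%N) | (i == 1%N) && (j == 5%N)].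

Definition S22 : rel 'I_6 := fun i j => S22_edge i j || S22_edge j i.

Definition planar (T : finType) (e : rel T) : Prop :=
  exists (pos : T -> (R * R)%type) (arc : T -> T -> R -> (R * R)%type),
    injective pos /\
    (forall x y, e x y ->
       {within `[0%R, 1%R], continuous (arc x y)} /\
       arc x y 0%R = pos x /\ arc x y 1%R = pos y /\
       {in `[0%R, 1%R] &, injective (arc x y)} /\
       (forall t, t \in `]0%R, 1%R[ -> forall z, arc x y t <> pos z)) /\
    (forall x y u v, e x y -> e u v -> [set x; y]%SET != [set u; v]%SET ->
       forall s t, s \in `]0%R, 1%R[ -> t \in `]0%R, 1%R[ ->
       arc x y s <> arc u v t).

From mathcomp Require Import all_boot all_order all_algebra.
From mathcomp Require classical_sets.
From mathcomp Require Import zify.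

(* In an S_{2,2}-free graph every
   neighbour of a vertex of degree >= 5 has degree <= 2, since otherwise the edge
   between them extends to an S_{2,2}.  Let H be the set of vertices of degree >= 5;
   it is independent.  Charging the degree of each vertex of H to its neighbours, every
   vertex y outside H carries deg y + #(H-neighbours of y) <= 4, so the degree sum
   is at most 4(n - |H|).  If |H| >= 2 this gives 2 e(G) <= 4n - 8; if H = {h},
   charging 2 per edge at h instead gives a degree sum <= 4(n - 1) - deg h <= 4n - 9. *)

Lemma card_set_sum (U : finType) (P : pred U) : #|[set u | P u]| = \sum_u (P u : nat).
Proof. by rewrite -sum1_card big_mkcond; apply: eq_bigr => u _; rewrite inE; case: (P u). Qed.

Section SimpleGraph.

Context {T : finType} {e : rel T}.
Hypotheses (e_sym : symmetric e) (e_irr : irreflexive e).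

Lemma degree_card x : degree e x = #|[set y | e x y]|.
Proof.
apply: eq_card => y; rewrite inE; apply/idP/idP.
  exact: classical_sets.set_mem.
exact: classical_sets.mem_set.
Qed.

Lemma degreeE x : degree e x = \sum_y (e x y : nat).
Proof. by rewrite degree_card card_set_sum. Qed.

Lemma num_edges_le_ordered_arcs (r : rel T) :
    (forall x y, x != y -> r x y || r y x) ->
  num_edges e <= #|[set p : T * T | e p.1 p.2 && r p.1 p.2]|.
Proof.
move=> r_total; apply: leq_trans (leq_imset_card (fun p : T * T => [set p.1; p.2]) _).
apply/subset_leq_card/subsetP => E; rewrite inE.
case/existsP=> x /existsP[y /andP[exy /eqP->]].
have /r_total/orP[rxy | ryx] : x != y by apply: contraTneq exy => ->; rewrite e_irr.
  by apply/imsetP; exists (x, y); rewrite ?inE /= ?exy.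
by apply/imsetP; exists (y, x); rewrite ?inE /= 1?e_sym ?exy ?ryx // setUC.
Qed.

Lemma handshake_le : 2 * num_edges e <= \sum_x degree e x.
Proof.
pose r : rel T := fun x y => enum_rank x < enum_rank y.
have r_total x y : x != y -> r x y || r y x.
  by move=> xy; rewrite /r -neq_ltn; apply: contra xy => /eqP/val_inj/enum_rank_inj->.
have r'_total x y : x != y -> r y x || r x y by move/r_total; rewrite orbC.
rewrite mul2n -addnn (leq_trans (leq_add (@num_edges_le_ordered_arcs r r_total)
  (@num_edges_le_ordered_arcs (fun x y => r y x) r'_total))) // !card_set_sum -big_split /=.
rewrite (eq_bigr _ (fun x _ => degreeE x)) pair_big /=.
by apply: leq_sum => -[x y] _ /=; case: (e x y); rewrite /r //=; case: ltngtP.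
Qed.

Lemma S22_subgraph h u c d a b :
    uniq [:: h; u; c; d; a; b] ->
    e h u -> e h c -> e h d -> e u a -> e u b ->
  has_subgraph S22 e.
Proof.
move=> s_uniq ehu ehc ehd eua eub.
exists (fun i : 'I_6 => nth h [:: h; u; c; d; a; b] i); split.
  by move=> i j /eqP; rewrite nth_uniq // => /eqP/val_inj.
move=> [i Hi] [j Hj]; rewrite /S22 /S22_edge /=.
case: i Hi => [|[|[|[|[|[|i]]]]]] Hi //; case: j Hj => [|[|[|[|[|[|j]]]]]] Hj //=.
all: by rewrite e_sym.
Qed.

Lemma S22_free_neighbor_degree_le2 h u :
    ~ has_subgraph S22 e -> 5 <= degree e h -> e h u -> degree e u <= 2.
Proof.
move=> S22_free deg_h ehu; rewrite leqNgt; apply/negP => deg_u; apply: S22_free.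
rewrite degree_card in deg_h; rewrite degree_card in deg_u.
have /card_gt1P[a [b [Nu_a Nu_b ab]]] : 1 < #|[set y | e u y] :\ h|.
  by have := cardsD1 h [set y | e u y]; have := leq_b1 (h \in [set y | e u y]); lia.
have /card_gt1P[c [d [Nh_c Nh_d cd]]] : 1 < #|[set y | e h y] :\: [set u; a; b]|.
  have card3 : #|[set u; a; b]| <= 3.
    by apply: leq_trans (leq_card_setU _ _) _; rewrite cards2 cards1; case: (u != a).
  have := subset_leq_card (subsetIr [set y | e h y] [set u; a; b]).
  by rewrite cardsD; lia.
move: Nu_a Nu_b Nh_c Nh_d; rewrite !inE !negb_or -!andbA.
move=> /andP[ah eua] /andP[bh eub] /and4P[cu ca cb ehc] /and4P[du da db ehd].
apply: (@S22_subgraph h u c d a b) => //=.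
have neq x y : e x y -> x != y by apply: contraTneq => ->; rewrite e_irr.
have hu := neq _ _ ehu; have hc := neq _ _ ehc; have hd := neq _ _ ehd.
have ua := neq _ _ eua; have ub := neq _ _ eub.
rewrite !inE !negb_or; do !(apply/andP; split) => //.
all: by rewrite eq_sym.
Qed.

Lemma sum_degree_le_independent (H : {set T}) :
    (forall x, x \notin H -> degree e x <= 4) ->
    (forall x, x \in H -> forall y, e x y -> degree e y <= 2) ->
    (forall x, x \in H -> 2 < degree e x) ->
  \sum_x degree e x + 4 * #|H| <= 4 * #|T|.
Proof.
move=> low_out low_nbr high_in.
pose c y := \sum_(x in H) (e x y : nat).
have c_in y : y \in H -> c y = 0.
  move=> yH; apply: big1 => x xH; case: (boolP (e x y)) => // exy.
  by have := low_nbr x xH y exy; have := high_in y yH; lia.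
have sum_in : \sum_(x in H) degree e x = \sum_(y | y \notin H) c y.
  rewrite (eq_bigr _ (fun x _ => degreeE x)) exchange_big (bigID [in H]) /=.
  by rewrite big1 ?add0n // => y /c_in.
have c_le_degree y : c y <= degree e y.
  rewrite degreeE [leqRHS](bigID [in H]) /= /c.
  by under eq_bigr => x _ do rewrite e_sym; exact: leq_addr.
have deg_c_le y : y \notin H -> c y + degree e y <= 4.
  move=> yH; have [deg_y | deg_y] := leqP (degree e y) 2.
    by have := c_le_degree y; lia.
  suff -> : c y = 0 by rewrite add0n low_out.
  apply: big1 => x xH; case: (boolP (e x y)) => // exy.
  by have := low_nbr x xH y exy; lia.
rewrite (bigID [in H]) /= sum_in -big_split /=.
rewrite -(cardsC H) mulnDr [leqRHS]addnC leq_add2r.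
apply: (@leq_trans (\sum_(i | i \notin H) 4)); first exact: leq_sum.
rewrite sum_nat_const mulnC leq_mul2l /=.
by apply: subset_leq_card; apply/subsetP => x; rewrite !inE.
Qed.

Lemma sum_degree_le_star h :
    (forall x, x != h -> degree e x <= 4) ->
    (forall y, e h y -> degree e y <= 2) ->
  \sum_x degree e x + degree e h + 4 <= 4 * #|T|.
Proof.
move=> low_out low_nbr.
have sum_nbr : \sum_(x | x != h) 2 * e h x = 2 * degree e h.
  by rewrite -big_distrr degreeE [in RHS](bigD1 h) //= e_irr.
have bound : \sum_(x | x != h) (degree e x + 2 * e h x) <= \sum_(x | x != h) 4.
  apply: leq_sum => x xh; case: (boolP (e h x)) => [ehx | _].
    by have := low_nbr x ehx; lia.
  by rewrite addn0 low_out.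
have T_pos : 0 < #|T| by apply/card_gt0P; exists h.
rewrite (bigD1 h) //=; move: bound; rewrite big_split /= sum_nbr sum_nat_const cardC1.
(* The two occurrences of [#|T|] differ in their coercion path, which [lia] cannot see. *)
set n := #|T| in T_pos *; lia.
Qed.

End SimpleGraph.

Theorem lemma2p2 (T : finType) (e : rel T) :
  simple_graph e -> 8 <= #|T| -> planar e -> ~ has_subgraph S22 e ->
  (exists v : T, 5 <= degree e v) ->
  num_edges e <= 2 * #|T| - 4.
Proof.
move=> [e_sym e_irr] _ _ S22_free [h deg_h].
suff : \sum_x degree e x + 8 <= 4 * #|T|.
  by have := handshake_le e_sym e_irr; lia.
pose H := [set x | 4 < degree e x].
have low_nbr x : x \in H -> forall y, e x y -> degree e y <= 2.
  by rewrite inE => high_x y; exact: S22_free_neighbor_degree_le2 e_sym e_irr x y S22_free high_x.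
have hH : h \in H by rewrite inE.
have [two_high | one_high] := leqP 2 #|H|.
  have low_out x : x \notin H -> degree e x <= 4 by rewrite inE -leqNgt.
  have high_in x : x \in H -> 2 < degree e x by rewrite inE; apply: ltn_trans.
  by have := sum_degree_le_independent e_sym H low_out low_nbr high_in; lia.
have low_out x : x != h -> degree e x <= 4.
  apply: contraR; rewrite -ltnNge => high_x; apply/eqP.
  by apply: (card_le1_eqP one_high); rewrite ?inE.
by have := sum_degree_le_star e_irr h low_out (low_nbr h hH); lia.
Qed.
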